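(* Fix $v\in[n]$. Let $G$ be a random variable with $\mathbb P(G\ge k)=2^{-k}$ for $k\in\{0,1,2,\dots\}$, independent of $\mathcal S_n(v)$, and let $D=\min\{G,|\mathcal S_n(v)|\}$. Then $d_n(v)\stackrel{\mathcal L}{=}D$, and for all $k,l\in\mathbb N$, \[\mathbb P(d_n(v)\ge k,\ h_n(v)\le l)=2^{-k}\,\mathbb P\big(\mathrm{Bin}(|\mathcal S_n(v)|-k,1/2)\le l,\ |\mathcal S_n(v)|\ge k\big),\] where, conditionally on $|\mathcal S_n(v)|$, the binomial variable has $|\mathcal S_n(v)|-k$ trials with success probability $1/2$.
   Context: Kingman's $n$-coalescent $(F_n,\dots,F_1)$: forests on $[n]$, rooted trees with edges directed towards roots; $F_n$ has no edges; for $2\le i\le n$, list the trees of $F_i$ as $T^{(i)}_1,\dots,T^{(i)}_i$ in increasing order of smallest label, choose $\{a_i,b_i\}$ uniformly among 2-subsets of $[i]$ and an independent fair bit $\xi_i$ (all independent over $i$), and obtain $F_{i-1}$ by adding an edge between the roots of $T^{(i)}_{a_i},T^{(i)}_{b_i}$ directed towards the root of $T^{(i)}_{\min(a_i,b_i)}$ if $\xi_i=1$, towards the other root otherwise (the head becomes the root of the merged tree). $T^{(n)}$ is the unique tree of $F_1$; $d_n(v)$ and $h_n(v)$ are the number of children and the depth of $v$ in $T^{(n)}$. For $v\in[n]$ and $1\le i\le n$, $T_i(v)$ is the tree of $F_i$ containing $v$. The selection set is $\mathcal S_n(v)=\{2\le i\le n: T_i(v)\in\{T^{(i)}_{a_i},T^{(i)}_{b_i}\}\}$.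 *)

From HB Require Import structures.
From mathcomp Require Import all_boot all_order all_algebra.
Set Implicit Arguments. Unset Strict Implicit. Unset Printing Implicit Defensive.
Import Order.TTheory GRing.Theory Num.Theory.

(* Labels [n] = {1..n} are represented by 'I_n = {0..n-1} (order preserved);
   tree indices 1..i are represented by 0..i-1.
   A forest is a parent map p : 'I_n -> 'I_n, with p r = r exactly for roots. *)
Definition forest (n : nat) := 'I_n -> 'I_n.

Definition froot n (p : forest n) (u : 'I_n) : 'I_n := iter n p u.

(* roots of the trees, listed in increasing order of the smallest label of the tree *)
Definition trees n (p : forest n) : seq 'I_n :=
  undup [seq froot p u | u <- enum 'I_n].

(* one step's randomness: a 2-subset {a,b} of tree indices and a bit xi *)
Definition choice_t n := ({set 'I_n} * bool)%type.

(* the roots of T_a and T_b (with a < b), in that order *)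
Definition chosen_roots n (c : choice_t n) (p : forest n) : seq 'I_n :=
  let idx := [seq val x | x <- enum c.1] in
  let a := nth 0 idx 0 in
  let b := nth 0 idx 1 in
  let ts := trees p in
  match ts with
  | [::] => [::]
  | t0 :: _ => [:: nth t0 ts a; nth t0 ts b]
  end.

(* F_i -> F_{i-1}: edge between the two roots, directed towards the root of
   T_{min(a,b)} if xi = true, towards the other root otherwise *)
Definition merge n (c : choice_t n) (p : forest n) : forest n :=
  match chosen_roots c p with
  | [:: ra; rb] =>
      let hd := if c.2 then ra else rb in
      let tl := if c.2 then rb else ra in
      fun u => if u == tl then hd else p u
  | _ => p
  end.

(* sample space: omega i = (set {a_i,b_i}, xi_i) for 2 <= i <= n; dummy otherwise *)
Definition outcome n := {ffun 'I_n.+1 -> choice_t n}.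

Definition Omega n : {set outcome n} :=
  [set w : outcome n | [forall i : 'I_n.+1,
     if 2 <= i then (#|(w i).1| == 2) && [forall x in (w i).1, x < i]
     else w i == (set0, false)]].

(* forest after k merges, i.e. F_{n-k} *)
Fixpoint after n (w : outcome n) (k : nat) : forest n :=
  match k with
  | 0 => id
  | k'.+1 => merge (w (inord (n - k'))) (after w k')
  end.

Definition F n (w : outcome n) (i : nat) : forest n := after w (n - i).

Definition Tn n (w : outcome n) : forest n := F w 1.

Definition dn n (w : outcome n) (v : 'I_n) : nat :=
  #|[set u : 'I_n | (u != v) && (Tn w u == v)]|.

Definition hn n (w : outcome n) (v : 'I_n) : nat :=
  let p := Tn w in find (fun k => p (iter k p v) == iter k p v) (iota 0 n).

Definition Sel n (w : outcome n) (v : 'I_n) : {set 'I_n.+1} :=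
  [set i : 'I_n.+1 | (2 <= i) &&
     (froot (F w i) v \in chosen_roots (w i) (F w i))].

Local Open Scope ring_scope.

(* probability of an event under the uniform (= product) measure on Omega n *)
Definition Pr n (E : pred (outcome n)) : rat :=
  #|[set w in Omega n | E w]|%:R / #|Omega n|%:R.

(* G with P(G >= k) = 2^-k *)
Definition tailG (k : nat) : rat := (2 : rat) ^- k.

(* P(min(G, s) = k) *)
Definition PminG (s k : nat) : rat :=
  if (k < s)%N then tailG k - tailG k.+1
  else if k == s then tailG s else 0.

(* P(Bin(m, 1/2) <= l) *)
Definition binom_cdf (m l : nat) : rat :=
  \sum_(j < l.+1) ('C(m, j))%:R / (2 : rat) ^+ m.

(* Follow the tree containing v through the coalescent.  At each selection
   time it is merged with another tree, and xi decides whether its root stays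
   a root ("stays") or is grafted below the other root ("grafted").  While v
   is the root of its tree, each "stays" gives v one more child and the first
   "grafted" makes v a non-root forever, so d_n(v) is the number of leading
   "stays"; every "grafted" pushes the whole tree, v included, one level down,
   so h_n(v) is the number of "grafted".  The pairs {a_i, b_i} alone determine
   which vertices share a tree, hence S_n(v); given them, the recorded choices
   are the bits xi_i, i in S_n(v), xored with a fixed mask, hence i.i.d. fair.
   Both formulas then reduce to counting bit sequences of length |S_n(v)|. *)

From Pilot Require Import Defs.
From mathcomp Require Import all_boot all_order all_algebra.
From mathcomp Require Import zify ring.
Import GRing.Theory.
Set Implicit Arguments. Unset Strict Implicit. Unset Printing Implicit Defensive.

(* [fingraph.froot] and [path.merge] would otherwise shadow the definitions of [Defs]. *)
Local Notation froot := Defs.froot.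
Local Notation merge := Defs.merge.

Section ParentMaps.
Variable n : nat.
Implicit Types (p : forest n) (u r : 'I_n).

Definition acyclic p := forall u k, iter k.+1 p u = u -> p u = u.

Lemma ord_pos u : 0 < n. Proof. by case: n u => [[]|]. Qed.

Lemma iter_fixed p u k : p u = u -> iter k p u = u.
Proof. by move=> pu; elim: k => //= k ->. Qed.

Lemma iter_fixed_ge p u j m :
  p (iter j p u) = iter j p u -> j <= m -> iter m p u = iter j p u.
Proof. by move=> fix_j /subnK <-; rewrite iterD iter_fixed. Qed.

Lemma iter_eq_fixed p u i j : acyclic p -> i < j ->
  iter i p u = iter j p u -> p (iter i p u) = iter i p u.
Proof.
move=> acp lt_ij eq_ij; apply: (acp _ (j - i).-1).
by rewrite -iterD prednK ?subn_gt0 // subnK // ltnW.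
Qed.

(* Pigeonhole: the points [iter j p u], j < n, cannot all be distinct
   non-roots, as [iter n p u] would then revisit one of them. *)
Lemma iter_predn_fixed p u : acyclic p -> p (iter n.-1 p u) = iter n.-1 p u.
Proof.
move=> acp; apply/eqP/negPn/negP => not_fix.
have n_gt0 := ord_pos u.
have nonroot j : j < n -> p (iter j p u) != iter j p u.
  move=> lt_jn; apply: contra not_fix => /eqP fix_j.
  by rewrite (@iter_fixed_ge _ _ j) ?fix_j // -ltnS prednK.
have inj_it : injective (fun j : 'I_n => iter j p u).
  move=> i j eq_ij; apply: val_inj => /=.
  case: (ltngtP i j) => // [lt_ij|lt_ji].
  - by move: (nonroot i (ltn_ord i)); rewrite (iter_eq_fixed acp lt_ij eq_ij) eqxx.
  - by move: (nonroot j (ltn_ord j)); rewrite (iter_eq_fixed acp lt_ji (esym eq_ij)) eqxx.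
have /codomP [j eq_j] := inj_card_onto inj_it (leqnn _) (iter n p u).
by move: (nonroot j (ltn_ord j)); rewrite (iter_eq_fixed acp (ltn_ord j) (esym eq_j)) eqxx.
Qed.

Lemma frootE p u : acyclic p -> froot p u = iter n.-1 p u.
Proof.
move=> acp; have n_eq : n = n.-1.+1 by rewrite prednK // (ord_pos u).
by rewrite /froot (congr1 (fun k => iter k p u) n_eq) /= iter_predn_fixed.
Qed.

Lemma froot_fixed p u : acyclic p -> p (froot p u) = froot p u.
Proof. by move=> acp; rewrite frootE ?iter_predn_fixed. Qed.

Lemma froot_iter p u r j : acyclic p -> p r = r -> iter j p u = r -> froot p u = r.
Proof.
move=> acp pr eq_r; rewrite frootE //.
rewrite -(iter_fixed_ge (iter_predn_fixed u acp) (leq_maxr j n.-1)).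
by rewrite (@iter_fixed_ge _ _ j) ?leq_maxl // eq_r.
Qed.

Lemma froot_root p u : acyclic p -> p u = u -> froot p u = u.
Proof. by move=> acp pu; apply: (froot_iter (j := 0)). Qed.

Lemma froot_id u : froot (id : forest n) u = u.
Proof. exact: iter_fixed. Qed.

Definition depth p u := find (fun k => p (iter k p u) == iter k p u) (iota 0 n).

Definition children p r := #|[set u | (u != r) && (p u == r)]|.

Lemma depthE p u j : acyclic p -> p (iter j p u) = iter j p u ->
  (forall i, i < j -> p (iter i p u) != iter i p u) -> depth p u = j.
Proof.
move=> acp fix_j nonroot.
have lt_jn : j < n.
  rewrite ltnNge; apply/negP => le_nj.
  have lt_pred : n.-1 < n by rewrite ltn_predL (ord_pos u).
  by move: (nonroot n.-1 (leq_trans lt_pred le_nj)); rewrite iter_predn_fixed ?eqxx.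
rewrite /depth; set P := (fun k => _).
have PE i : i < n -> P (nth 0 (iota 0 n) i) = (p (iter i p u) == iter i p u).
  by move=> lt_in; rewrite nth_iota.
case: (ltngtP (find P (iota 0 n)) j) => [lt_fj|lt_jf|//].
- have lt_fn : find P (iota 0 n) < n by rewrite (ltn_trans lt_fj).
  have has_P : has P (iota 0 n) by rewrite has_find size_iota.
  move: (nth_find 0 has_P); rewrite PE // => /eqP fix_f.
  by move: (nonroot _ lt_fj); rewrite fix_f eqxx.
- by move: (before_find 0 lt_jf); rewrite PE // fix_j eqxx.
Qed.

Lemma depth_id u : depth (id : forest n) u = 0.
Proof. exact: depthE. Qed.

Lemma children_id r : children (id : forest n) r = 0.
Proof. by apply/eqP; rewrite cards_eq0; apply/eqP/setP => u; rewrite !inE andNb. Qed.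

End ParentMaps.

Definition graft n (p : forest n) (hd tl : 'I_n) : forest n :=
  fun u => if u == tl then hd else p u.

Section Graft.
Variables (n : nat) (p : forest n) (hd tl : 'I_n).
Hypotheses (acp : acyclic p) (p_hd : p hd = hd) (p_tl : p tl = tl).
Local Notation q := (graft p hd tl).

Lemma graft_hd : q hd = hd.
Proof. by rewrite /graft; case: eqP. Qed.

Lemma iter_graft_off u : froot p u != tl -> forall m, iter m q u = iter m p u.
Proof.
move=> not_tl; elim=> //= m ->; rewrite /graft ifN //.
by apply: contra not_tl => /eqP eq_tl; rewrite (froot_iter acp p_tl eq_tl).
Qed.

Lemma iter_graft_on u : froot p u = tl -> exists j,
  [/\ iter j.+1 q u = hd, forall m, m <= j -> iter m q u = iter m p u,
      iter j p u = tl & forall m, m < j -> iter m p u != tl].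
Proof.
move=> root_tl.
have ex_j : exists j, iter j p u == tl by exists n; rewrite -root_tl.
case: (ex_minnP ex_j) => j /eqP eq_j min_j.
have before_j m : m < j -> iter m p u != tl.
  by move=> lt_mj; apply/negP => /min_j; rewrite leqNgt lt_mj.
have agree m : m <= j -> iter m q u = iter m p u.
  elim: m => //= m IHm lt_mj; rewrite IHm 1?ltnW // /graft ifN //.
  exact: before_j.
by exists j; split=> //=; rewrite agree // eq_j /graft eqxx.
Qed.

Lemma iter_graft_hd u j m : iter j q u = hd -> j <= m -> iter m q u = hd.
Proof. by move=> eq_hd /subnK <-; rewrite iterD eq_hd iter_fixed ?graft_hd. Qed.

Lemma acyclic_graft : acyclic q.
Proof.
move=> u k cyc_u.
have [root_tl|not_tl] := eqVneq (froot p u) tl.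
  have [j [to_hd _ _ _]] := iter_graft_on root_tl.
  have iter_u c : iter (c * k.+1) q u = u.
    by elim: c => // c IHc; rewrite mulSn iterD IHc cyc_u.
  rewrite -(iter_u j.+1) (iter_graft_hd to_hd) ?leq_pmulr //.
  exact: graft_hd.
have u_tl : u != tl.
  by apply: contra not_tl => /eqP u_tl; rewrite (@froot_iter _ _ _ tl 0) ?u_tl.
rewrite /graft ifN //; apply: (acp (k := k)).
by rewrite -(iter_graft_off not_tl).
Qed.

Lemma froot_graft u : froot q u = if froot p u == tl then hd else froot p u.
Proof.
have [root_tl|not_tl] := eqVneq (froot p u) tl.
  have [j [to_hd _ _ _]] := iter_graft_on root_tl.
  exact: (froot_iter acyclic_graft graft_hd to_hd).
apply: (@froot_iter _ _ _ _ n acyclic_graft); last by rewrite iter_graft_off.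
by rewrite /graft ifN ?froot_fixed.
Qed.

Hypothesis hd_tl : hd != tl.

Lemma children_graft r : children q r = children p r + (r == hd).
Proof.
rewrite /children; have [->|r_hd] := eqVneq r hd.
  have -> : [set u | (u != hd) && (q u == hd)] =
            tl |: [set u | (u != hd) && (p u == hd)].
    apply/setP => u; rewrite !inE /graft.
    case: (eqVneq u tl) => [->|//]; by rewrite eqxx andbT eq_sym.
  by rewrite cardsU1 inE p_tl addn1 andNb.
rewrite addn0; apply: eq_card => u; rewrite !inE /graft.
case: (eqVneq u tl) => [->|//]; rewrite p_tl.
by case: (eqVneq tl r) => // _; rewrite eq_sym (negbTE r_hd).
Qed.

Lemma graft_fixed u : (q u == u) = (p u == u) && (u != tl).
Proof.
rewrite /graft; case: (eqVneq u tl) => [->|_]; last by rewrite andbT.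
by rewrite p_tl eqxx (negbTE hd_tl).
Qed.

Lemma depth_graft u : depth q u = depth p u + (froot p u == tl).
Proof.
have [root_tl|not_tl] := eqVneq (froot p u) tl; last first.
  rewrite addn0 /depth; apply: eq_find => k /=.
  rewrite iter_graft_off // /graft ifN //.
  by apply: contra not_tl => /eqP eq_tl; rewrite (froot_iter acp p_tl eq_tl).
have [j [to_hd agree at_j before_j]] := iter_graft_on root_tl.
have nonroot m : m < j -> p (iter m p u) != iter m p u.
  move=> lt_mj; apply: contra (before_j m lt_mj) => /eqP fix_m.
  by rewrite -root_tl (froot_iter (j := m) acp fix_m).
rewrite (@depthE _ p u j) ?at_j // addn1.
apply: depthE; [exact: acyclic_graft | by rewrite to_hd graft_hd |].
move=> m; rewrite ltnS leq_eqVlt => /orP [/eqP ->|lt_mj].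
  by rewrite agree // at_j /graft eqxx.
by rewrite agree 1?ltnW // /graft ifN ?nonroot ?before_j.
Qed.

Lemma graft_stats_on u : (froot p u == hd) || (froot p u == tl) ->
  [/\ children q u = children p u + (p u == u) && (froot p u == hd),
      depth q u = depth p u + ~~ (froot p u == hd) &
      (q u == u) = (p u == u) && (froot p u == hd)].
Proof.
move=> in_hd_tl.
have tl_hd : (froot p u == tl) = ~~ (froot p u == hd).
  by case/orP: in_hd_tl => /eqP ->; rewrite ?eqxx ?(negbTE hd_tl) // eq_sym (negbTE hd_tl).
have [pu|pu] := eqVneq (p u) u; last first.
  rewrite children_graft depth_graft graft_fixed tl_hd (negbTE pu).
  by case: (eqVneq u hd) pu => [->|]; rewrite ?p_hd ?eqxx.
have root_u := froot_root acp pu.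
rewrite children_graft depth_graft graft_fixed tl_hd pu eqxx /= root_u.
by rewrite -root_u tl_hd negbK.
Qed.

Lemma graft_stats_off u : ~~ ((froot p u == hd) || (froot p u == tl)) ->
  [/\ children q u = children p u, depth q u = depth p u & (q u == u) = (p u == u)].
Proof.
rewrite negb_or => /andP [not_hd not_tl].
have u_hd : (u == hd) = false.
  by apply: contraNF not_hd => /eqP ->; rewrite froot_root.
have u_tl : u != tl by apply: contra not_tl => /eqP ->; rewrite froot_root.
by rewrite children_graft depth_graft graft_fixed u_hd (negbTE not_tl) u_tl !addn0 andbT.
Qed.

End Graft.

Lemma undup_map_kernel (T U V : eqType) (f : T -> U) (g : T -> V) (s : seq T) :
  (forall x y, (f x == f y) = (g x == g y)) ->
  size (undup (map f s)) = size (undup (map g s)) /\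
  forall x, index (f x) (undup (map f s)) = index (g x) (undup (map g s)).
Proof.
move=> fg; elim: s => [|y s [IHsize IHindex]] //=.
have -> : (f y \in map f s) = (g y \in map g s).
  by rewrite -!has_pred1 !has_map; apply: eq_has => z /=; rewrite /preim /= eq_sym fg eq_sym.
case: (g y \in map g s) => //=; split=> [|x]; first by rewrite IHsize.
by rewrite fg IHindex.
Qed.

Lemma nth_head_eq (T : eqType) (d : T) (s : seq T) a j : uniq s -> j < size s ->
  (nth (head d s) s a == nth (head d s) s j) = ((if a < size s then a else 0) == j).
Proof.
move=> uniq_s lt_js; case: ltnP => [lt_as|le_sa]; first by rewrite nth_uniq.
have s_gt0 : 0 < size s by apply: leq_ltn_trans lt_js.
have head_nth0 : head d s = nth (head d s) s 0 by case: s s_gt0 {uniq_s lt_js le_sa}.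
by rewrite nth_default // {1}head_nth0 nth_uniq.
Qed.

Lemma size_undup_card (T : finType) (s : seq T) : size (undup s) = #|s|.
Proof. by rewrite -(card_uniqP (undup_uniq s)); apply: eq_card => x; rewrite mem_undup. Qed.

Section Trees.
Variable n : nat.
Implicit Types (p q : forest n) (x r d : 'I_n) (c : choice_t n).

Lemma froot_in_trees p x : froot p x \in trees p.
Proof. by rewrite mem_undup; apply: map_f; rewrite mem_enum. Qed.

Lemma trees_fixed p r : acyclic p -> r \in trees p -> p r = r.
Proof. by move=> acp; rewrite mem_undup => /mapP [u _ ->]; apply: froot_fixed. Qed.

Lemma size_trees_id : size (trees (id : forest n)) = n.
Proof.
rewrite /trees (eq_map (@froot_id n)) map_id undup_id ?enum_uniq //.
exact: size_enum_ord.
Qed.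

Lemma size_trees_graft p hd tl : acyclic p -> hd \in trees p -> tl \in trees p ->
  hd != tl -> size (trees (graft p hd tl)) = (size (trees p)).-1.
Proof.
move=> acp hd_in tl_in hd_tl.
have p_hd := trees_fixed acp hd_in; have p_tl := trees_fixed acp tl_in.
rewrite /trees (eq_map (froot_graft acp p_hd p_tl)) !size_undup_card.
rewrite /trees !mem_undup in hd_in tl_in.
rewrite [in RHS](cardD1 tl) tl_in add1n /=; apply: eq_card => z; rewrite !inE.
apply/mapP/andP => [[y y_in ->]|[z_tl /mapP [y y_in eq_z]]].
  by case: (eqVneq (froot p y) tl) => [_|y_tl]; split=> //; apply: map_f.
by exists y => //; rewrite -eq_z (negbTE z_tl).
Qed.

Definition same_partition p q :=
  forall x y, (froot p x == froot p y) = (froot q x == froot q y).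

Lemma size_trees_same p q : same_partition p q -> size (trees p) = size (trees q).
Proof. by move=> pq; case: (undup_map_kernel (enum 'I_n) pq). Qed.

Lemma index_trees_same p q x : same_partition p q ->
  index (froot p x) (trees p) = index (froot q x) (trees q).
Proof. by move=> pq; case: (undup_map_kernel (enum 'I_n) pq). Qed.

(* [d] is only a default value for the empty forest, which never occurs. *)
Definition tree_root p a d := nth (head d (trees p)) (trees p) a.

Lemma tree_root_in p a d : tree_root p a d \in trees p.
Proof.
rewrite /tree_root; case: (ltnP a (size (trees p))) => [|le_sa]; first exact: mem_nth.
rewrite nth_default //; move: (froot_in_trees p d).
by case: (trees p) => //= r s _; apply: mem_head.
Qed.

Lemma froot_eq_tree_root p x a d : (froot p x == tree_root p a d) =
  ((if a < size (trees p) then a else 0) == index (froot p x) (trees p)).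
Proof.
rewrite /tree_root -{1}(nth_index (head d (trees p)) (froot_in_trees p x)) eq_sym.
by rewrite nth_head_eq ?undup_uniq ?index_mem ?froot_in_trees.
Qed.

Lemma froot_eq_tree_root_same p q x a d : same_partition p q ->
  (froot p x == tree_root p a d) = (froot q x == tree_root q a d).
Proof.
by move=> pq; rewrite !froot_eq_tree_root (size_trees_same pq) (index_trees_same _ pq).
Qed.

Definition idx_a c := nth 0 [seq val x | x <- enum c.1] 0.
Definition idx_b c := nth 0 [seq val x | x <- enum c.1] 1.
Definition head_root p c d := tree_root p (if c.2 then idx_a c else idx_b c) d.
Definition tail_root p c d := tree_root p (if c.2 then idx_b c else idx_a c) d.

Lemma chosen_rootsE p c d :
  chosen_roots c p = [:: tree_root p (idx_a c) d; tree_root p (idx_b c) d].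
Proof.
rewrite /chosen_roots /tree_root /idx_a /idx_b.
by move: (froot_in_trees p d); case: (trees p).
Qed.

Lemma mem_chosen_roots p c d x : (x \in chosen_roots c p) =
  (x == head_root p c d) || (x == tail_root p c d).
Proof. by rewrite (chosen_rootsE _ _ d) !inE /head_root /tail_root; case: c.2; rewrite // orbC. Qed.

Lemma mergeE p c d : merge c p = graft p (head_root p c d) (tail_root p c d).
Proof. by rewrite /merge (chosen_rootsE _ _ d) /head_root /tail_root; case: c.2. Qed.

Lemma head_root_in p c d : head_root p c d \in trees p.
Proof. exact: tree_root_in. Qed.

Lemma tail_root_in p c d : tail_root p c d \in trees p.
Proof. exact: tree_root_in. Qed.

Lemma acyclic_merge p c : acyclic p -> acyclic (merge c p).
Proof.
move=> acp x; have d := x; rewrite (mergeE _ _ d).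
by apply: acyclic_graft => //; apply: trees_fixed; rewrite ?head_root_in ?tail_root_in.
Qed.

Lemma froot_merge p c d x : acyclic p -> froot (merge c p) x =
  if froot p x == tail_root p c d then head_root p c d else froot p x.
Proof.
move=> acp; rewrite (mergeE _ _ d).
by apply: froot_graft => //; apply: trees_fixed; rewrite ?head_root_in ?tail_root_in.
Qed.

Lemma eq_graft_roots (T : eqType) (hd tl x y : T) :
  ((if x == tl then hd else x) == (if y == tl then hd else y)) =
  (x == y) || (((x == hd) || (x == tl)) && ((y == hd) || (y == tl))).
Proof.
case: (eqVneq x tl) => [->|x_tl]; case: (eqVneq y tl) => [->|y_tl].
- by rewrite eqxx.
- by rewrite orbT orbF /= eq_sym.
- by rewrite orbT orbF andbT /= (negbTE x_tl).
- rewrite !orbF; case: (eqVneq x y) => //= x_y; case: (eqVneq x hd) => //= x_hd.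
  by rewrite -x_hd eq_sym (negbTE x_y).
Qed.

Lemma head_tail_neq p c d : idx_a c != idx_b c ->
  idx_a c < size (trees p) -> idx_b c < size (trees p) ->
  head_root p c d != tail_root p c d.
Proof.
move=> neq_ab lt_a lt_b; rewrite /head_root /tail_root /tree_root.
by case: c.2; rewrite nth_uniq ?undup_uniq // eq_sym.
Qed.

Lemma mem_chosen_roots_same p q c c' x : same_partition p q -> c.1 = c'.1 ->
  (froot p x \in chosen_roots c p) = (froot q x \in chosen_roots c' q).
Proof.
move=> pq eq_c; rewrite !(chosen_rootsE _ _ x) !inE /idx_a /idx_b eq_c.
by rewrite !(froot_eq_tree_root_same _ _ _ pq).
Qed.

(* The bit [c.2] only decides which of the two roots survives. *)
Lemma same_partition_merge p q c c' : acyclic p -> acyclic q ->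
  same_partition p q -> c.1 = c'.1 -> same_partition (merge c p) (merge c' q).
Proof.
move=> acp acq pq eq_c x y; rewrite !(froot_merge _ x) // !eq_graft_roots pq.
rewrite -!(mem_chosen_roots _ _ x).
by rewrite !(mem_chosen_roots_same _ pq eq_c).
Qed.

End Trees.

Fixpoint lead_trues (s : seq bool) : nat :=
  if s is b :: s' then (if b then (lead_trues s').+1 else 0) else 0.

Lemma lead_trues_rcons s b : lead_trues (rcons s b) = lead_trues s + (all id s && b).
Proof. by elim: s => [|[] s IHs] //=; rewrite IHs. Qed.

Fixpoint bool_seqs m : seq (seq bool) :=
  if m is m'.+1 then map (cons true) (bool_seqs m') ++ map (cons false) (bool_seqs m')
  else [:: [::]].

Lemma size_bool_seqs m : size (bool_seqs m) = 2 ^ m.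
Proof. by elim: m => //= m IHm; rewrite size_cat !size_map IHm expnS mul2n addnn. Qed.

Lemma size_mem_bool_seqs m s : s \in bool_seqs m -> size s = m.
Proof.
elim: m s => [|m IHm] s /=; first by rewrite inE => /eqP ->.
by rewrite mem_cat => /orP [] /mapP [s' /IHm <- ->].
Qed.

Lemma count_size_bool_seqs (psi : nat -> bool) m :
  count (fun s => psi (size s)) (bool_seqs m) = psi m * 2 ^ m.
Proof.
rewrite (@eq_in_count _ _ (fun _ => psi m)) => [|s /size_mem_bool_seqs -> //].
by case: (psi m); rewrite ?count_predT ?count_pred0 ?size_bool_seqs ?mul1n.
Qed.

Lemma count_bool_seqsS (P : pred (seq bool)) m : count P (bool_seqs m.+1) =
  count (fun s => P (true :: s)) (bool_seqs m) + count (fun s => P (false :: s)) (bool_seqs m).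
Proof. by rewrite count_cat !count_map. Qed.

Lemma count_lead_trues_eq m k : count (fun s => lead_trues s == k) (bool_seqs m) =
  if k < m then 2 ^ (m - k.+1) else k == m.
Proof.
elim: m k => [|m IHm] [|k] //; rewrite count_bool_seqsS /=.
  by rewrite count_pred0 count_predT size_bool_seqs subn1.
by rewrite IHm count_pred0 addn0 ltnS.
Qed.

Lemma count_lead_trues_ge m k l :
  count (fun s => (k <= lead_trues s) && (count negb s <= l)) (bool_seqs m) =
  if k <= m then \sum_(j < l.+1) 'C(m - k, j) else 0.
Proof.
elim: m k l => [|m IHm] k l.
  by case: k => //=; rewrite big_ord_recl big1 // => j _; rewrite bin0n.
rewrite count_bool_seqsS /=; case: k => [|k]; last first.
  by rewrite count_pred0 addn0 IHm ltnS subSS.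
have count_cons_true l' : count (fun s => (0 <= (lead_trues s).+1) && (0 + count negb s <= l'))
    (bool_seqs m) = count (fun s => (0 <= lead_trues s) && (count negb s <= l')) (bool_seqs m).
  by apply: eq_count => s.
rewrite count_cons_true IHm subn0; case: l => [|l]; first by rewrite count_pred0 !big_ord1 !bin0.
have -> : count (fun s => (0 <= 0) && (1 + count negb s <= l.+1)) (bool_seqs m) =
          count (fun s => (0 <= lead_trues s) && (count negb s <= l)) (bool_seqs m).
  by apply: eq_count => s.
rewrite IHm subn0 [in RHS]big_ord_recl bin0.
under [in RHS]eq_bigr do rewrite /bump /= binS.
by rewrite big_split /= [X in X + _ = _]big_ord_recl bin0 addnA.
Qed.

Section Coalescent.
Variables (n : nat) (v : 'I_n).
Implicit Types (w : outcome n) (K : nat).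

Local Notation step K := (inord (n - K) : 'I_n.+1).

Lemma val_step K : K <= n -> step K = n - K :> nat.
Proof. by move=> le_Kn; rewrite inordK // ltnS leq_subr. Qed.

Lemma F_step w K : K <= n -> F w (step K) = after w K.
Proof. by move=> le_Kn; rewrite /F val_step // subKn. Qed.

Lemma acyclic_after w K : acyclic (after w K).
Proof. by elim: K => [|K IHK] //=; apply: acyclic_merge. Qed.

Definition same_pairs w w' := forall i, (w i).1 = (w' i).1.

Lemma same_partition_after w w' K :
  same_pairs w w' -> same_partition (after w K) (after w' K).
Proof.
move=> ww'; elim: K => [|K IHK] //=.
by apply: same_partition_merge => //; apply: acyclic_after.
Qed.

Lemma Sel_same_pairs w w' : same_pairs w w' -> Sel w v = Sel w' v.
Proof.
move=> ww'; apply/setP => i; rewrite !inE.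
by rewrite (mem_chosen_roots_same _ (same_partition_after _ ww') (ww' i)).
Qed.

Lemma Omega_pair w (t : 'I_n.+1) : w \in Omega n -> 2 <= t ->
  [/\ idx_a (w t) != idx_b (w t), idx_a (w t) < t & idx_b (w t) < t].
Proof.
rewrite inE => /forallP /(_ t) + le_2t; rewrite le_2t.
case/andP=> /eqP card2 /forall_inP lt_t.
set s := [seq val x | x <- enum (w t).1].
have size_s : size s = 2 by rewrite size_map -cardE.
have uniq_s : uniq s by rewrite map_inj_uniq ?enum_uniq //; apply: val_inj.
have lt_s k : k < 2 -> nth 0 s k < t.
  move=> lt_k2; have /mapP [x] : nth 0 s k \in s by rewrite mem_nth ?size_s.
  by rewrite mem_enum => /lt_t + ->.
by split; [rewrite /idx_a /idx_b nth_uniq ?size_s | exact: lt_s | exact: lt_s].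
Qed.

Lemma step_roots_neq w K : w \in Omega n -> K < n.-1 ->
  size (trees (after w K)) = n - K ->
  head_root (after w K) (w (step K)) v != tail_root (after w K) (w (step K)) v.
Proof.
move=> wO lt_K size_K; have le_Kn : K <= n by lia.
have le_2K : 2 <= step K by rewrite val_step //; lia.
have [neq_ab lt_a lt_b] := Omega_pair wO le_2K.
have le_step : step K <= size (trees (after w K)) by rewrite size_K val_step.
by apply: head_tail_neq; [|exact: leq_trans le_step|exact: leq_trans le_step].
Qed.

Lemma size_trees_after w K : w \in Omega n -> K <= n.-1 ->
  size (trees (after w K)) = n - K.
Proof.
move=> wO; elim: K => [|K IHK] lt_K; first by rewrite size_trees_id subn0.
have IH := IHK (ltnW lt_K).
rewrite /= (mergeE _ _ v) size_trees_graft ?head_root_in ?tail_root_in //.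
- by rewrite IH; lia.
- exact: acyclic_after.
- exact: step_roots_neq.
Qed.

Lemma head_tail_after w K : w \in Omega n -> K < n.-1 ->
  head_root (after w K) (w (step K)) v != tail_root (after w K) (w (step K)) v.
Proof. by move=> wO lt_K; rewrite step_roots_neq // size_trees_after // ltnW. Qed.

Lemma Sel_step w K : K < n.-1 -> (step K \in Sel w v) =
  (froot (after w K) v \in chosen_roots (w (step K)) (after w K)).
Proof.
move=> lt_K; have le_Kn : K <= n by lia.
by rewrite inE F_step // val_step // (_ : 2 <= n - K) //; lia.
Qed.

Definition keeps_root w (t : 'I_n.+1) :=
  froot (F w t) v == head_root (F w t) (w t) v.

Definition sel_times w K := [seq t <- [seq step k | k <- iota 0 K] | t \in Sel w v].

Definition root_record w K := map (keeps_root w) (sel_times w K).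

Lemma root_record_S w K : root_record w K.+1 =
  if step K \in Sel w v then rcons (root_record w K) (keeps_root w (step K))
  else root_record w K.
Proof.
rewrite /root_record /sel_times.
have -> : iota 0 K.+1 = rcons (iota 0 K) K by rewrite -cats1 -addn1 iotaD.
rewrite map_rcons filter_rcons.
by case: ifP; rewrite // map_rcons.
Qed.

Lemma root_record_stats w K : w \in Omega n -> K <= n.-1 ->
  [/\ children (after w K) v = lead_trues (root_record w K),
      depth (after w K) v = count negb (root_record w K) &
      (after w K v == v) = all id (root_record w K)].
Proof.
move=> wO; elim: K => [|K IHK] lt_K.
  by rewrite /root_record /sel_times /= children_id depth_id eqxx.
have [IHc IHd IHr] := IHK (ltnW lt_K).
have acp := @acyclic_after w K.
have p_hd := trees_fixed acp (head_root_in (after w K) (w (step K)) v).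
have p_tl := trees_fixed acp (tail_root_in (after w K) (w (step K)) v).
have hd_tl := head_tail_after wO lt_K.
have keepE : keeps_root w (step K) =
    (froot (after w K) v == head_root (after w K) (w (step K)) v).
  by rewrite /keeps_root F_step //; lia.
rewrite [after _ K.+1](mergeE _ _ v) root_record_S Sel_step // (mem_chosen_roots _ _ v).
case: ifP => [sel|not_sel].
  have [-> -> ->] := graft_stats_on acp p_hd p_tl hd_tl sel.
  rewrite lead_trues_rcons -cats1 count_cat all_cat /= addn0 andbT keepE.
  by rewrite IHc IHd IHr.
by have [-> -> ->] := graft_stats_off acp p_hd p_tl hd_tl (negbT not_sel).
Qed.

Lemma step_inj K K' : K <= n -> K' <= n -> step K = step K' -> K = K'.
Proof. by move=> le_K le_K' /(congr1 val) /=; rewrite !val_step //; lia. Qed.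

Lemma stepP (t : 'I_n.+1) : 2 <= t -> exists2 K, K < n.-1 & t = step K.
Proof.
move=> le_2t; have lt_tn := ltn_ord t.
by exists (n - t); [lia | apply: val_inj; rewrite /= val_step ?leq_subr //; lia].
Qed.

Lemma Sel_ge2 w (t : 'I_n.+1) : t \in Sel w v -> 2 <= t.
Proof. by rewrite inE => /andP []. Qed.

Lemma uniq_sel_times w : uniq (sel_times w n.-1).
Proof.
apply/filter_uniq; rewrite map_inj_in_uniq ?iota_uniq // => K K'.
rewrite !mem_iota !add0n => /andP [_ lt_K] /andP [_ lt_K'].
by apply: step_inj; lia.
Qed.

Lemma mem_sel_times w t : (t \in sel_times w n.-1) = (t \in Sel w v).
Proof.
rewrite mem_filter andb_idr // => /Sel_ge2 /stepP [K lt_K ->].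
by apply: map_f; rewrite mem_iota.
Qed.

Lemma card_Sel w : #|Sel w v| = size (sel_times w n.-1).
Proof.
rewrite -(card_uniqP (uniq_sel_times w)); apply: eq_card => t.
by rewrite mem_sel_times.
Qed.

Lemma children_Tn w : w \in Omega n -> dn w v = lead_trues (root_record w n.-1).
Proof.
move=> wO; have [<- _ _] := root_record_stats wO (leqnn _).
by rewrite /dn /Tn /F subn1.
Qed.

Lemma depth_Tn w : w \in Omega n -> hn w v = count negb (root_record w n.-1).
Proof.
move=> wO; have [_ <- _] := root_record_stats wO (leqnn _).
by rewrite /hn /Tn /F subn1.
Qed.

(* At a selection time the tree of [v] is one of the two distinct chosen
   trees, so [v] keeps its root iff xi says so for [T_a] and the opposite for
   [T_b]. *)
Lemma keeps_root_Sel w t : w \in Omega n -> t \in Sel w v -> keeps_root w t =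
  (w t).2 (+) ~~ (froot (F w t) v == tree_root (F w t) (idx_a (w t)) v).
Proof.
move=> wO sel; have [K lt_K eq_t] := stepP (Sel_ge2 sel).
move: sel; rewrite eq_t Sel_step // (mem_chosen_roots _ _ v) /keeps_root F_step; last lia.
have := head_tail_after wO lt_K.
rewrite /head_root /tail_root; case: (w (step K)).2 => /= neq_ab; first by rewrite negbK.
by case/orP=> /eqP ->; rewrite eqxx ?neq_ab // eq_sym (negbTE neq_ab).
Qed.

End Coalescent.

Section BitFlips.
Variables (I : finType) (B : {set {ffun I -> bool}}).
Implicit Types (b : {ffun I -> bool}) (t : I -> bool) (L : seq I).

Definition flip i b : {ffun I -> bool} := [ffun j => if j == i then ~~ b j else b j].

Lemma flipK i : involutive (flip i).
Proof. by move=> b; apply/ffunP => j; rewrite !ffunE; case: eqP; rewrite ?negbK. Qed.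

Definition flip_closed i := forall b, (flip i b \in B) = (b \in B).

Local Notation xor_view t L b := [seq b j (+) t j | j <- L].

Lemma card_half_bit i c t L (Q : pred (seq bool)) : flip_closed i -> i \notin L ->
  2 * #|[set b in B | (b i == c) && Q (xor_view t L b)]| =
  #|[set b in B | Q (xor_view t L b)]|.
Proof.
move=> closed_i i_L.
have flip_view b : xor_view t L (flip i b) = xor_view t L b.
  apply/eq_in_map => j j_L; rewrite ffunE ifN //.
  by apply: contraNneq i_L => <-.
have flip_card : #|[set b in B | (b i == ~~ c) && Q (xor_view t L b)]| =
                 #|[set b in B | (b i == c) && Q (xor_view t L b)]|.
  rewrite -(card_imset _ (can_inj (flipK i))) (can2_imset_pre _ (flipK i) (flipK i)).
  apply: eq_card => b; rewrite !inE closed_i flip_view ffunE eqxx.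
  by case: (b i); case: c.
rewrite mul2n -addnn -{2}flip_card.
rewrite -(cardID [pred b : {ffun I -> bool} | b i == c] [set b in B | Q (xor_view t L b)]).
congr (_ + _); apply: eq_card => b; rewrite !inE /=;
  by case: (b \in B); case: (Q _); case: (b i); case: (c).
Qed.

Lemma card_xor_view t L (Phi : pred (seq bool)) : uniq L -> {in L, forall i, flip_closed i} ->
  #|[set b in B | Phi (xor_view t L b)]| * 2 ^ size L =
  #|B| * count Phi (bool_seqs (size L)).
Proof.
elim: L Phi => [|i L IHL] Phi /=.
  move=> _ _; rewrite muln1 addn0; case: (Phi [::]) => /=.
    by rewrite muln1; apply: eq_card => b; rewrite inE andbT.
  by rewrite muln0; apply/eqP; rewrite cards_eq0; apply/eqP/setP => b; rewrite !inE andbF.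
case/andP=> i_L uniq_L closed_iL.
have closed_i := closed_iL i (mem_head _ _).
have closed_L : {in L, forall j, flip_closed j}.
  by move=> j j_L; apply: closed_iL; rewrite inE j_L orbT.
pose Q c (s : seq bool) := Phi (c :: s).
have -> : #|[set b in B | Phi (b i (+) t i :: xor_view t L b)]| =
    #|[set b in B | (b i == ~~ t i) && Q true (xor_view t L b)]| +
    #|[set b in B | (b i == t i) && Q false (xor_view t L b)]|.
  rewrite -(cardID [pred b : {ffun I -> bool} | b i == ~~ t i]
                  [set b in B | Phi (b i (+) t i :: xor_view t L b)]).
  congr (_ + _); apply: eq_card => b; rewrite !inE /= /Q;
    by case: (b i); case: (t i); rewrite /= ?andbT ?andbF.
rewrite count_cat !count_map mulnDr -!IHL // expnS mulnCA mulnDl mulnDr !mulnA.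
by rewrite !card_half_bit.
Qed.

End BitFlips.

Section OutcomeSplit.
Variable n : nat.

Definition pairs_t := {ffun 'I_n.+1 -> {set 'I_n}}.
Definition bits_t := {ffun 'I_n.+1 -> bool}.

Definition join (s : pairs_t) (b : bits_t) : outcome n := [ffun i => (s i, b i)].

Definition OmegaP : {set pairs_t} := [set s : pairs_t | [forall i : 'I_n.+1,
  if 2 <= i then (#|s i| == 2) && [forall x in s i, x < i] else s i == set0]].

Definition OmegaB : {set bits_t} := [set b : bits_t | [forall i : 'I_n.+1, (i < 2) ==> ~~ b i]].

Lemma join_Omega s b : (join s b \in Omega n) = (s \in OmegaP) && (b \in OmegaB).
Proof.
rewrite !inE; apply/forallP/andP => [Omega_sb|[/forallP sP /forallP bB] i].
  split; apply/forallP => i; move: (Omega_sb i); rewrite !ffunE /=.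
  - by case: ifP => // _ /eqP [-> _].
  - by rewrite [i < 2]ltnNge; case: ifP => //= _ /eqP [_ ->].
by move: (sP i) (bB i); rewrite !ffunE /= [i < 2]ltnNge; case: ifP => //= _ /eqP -> /negPf ->.
Qed.

Lemma join_bij : bijective (fun sb : pairs_t * bits_t => join sb.1 sb.2).
Proof.
exists (fun w : outcome n => ([ffun i => (w i).1] : pairs_t, [ffun i => (w i).2] : bits_t)).
  by case=> s b; congr pair; apply/ffunP => i; rewrite !ffunE.
by move=> w; apply/ffunP => i; rewrite !ffunE; case: (w i).
Qed.

Lemma card_Omega_join (E : pred (outcome n)) :
  #|[set w in Omega n | E w]| = \sum_(s in OmegaP) #|[set b in OmegaB | E (join s b)]|.
Proof.
rewrite -sum1_card (reindex _ (onW_bij _ join_bij)) big_mkcond /=.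
rewrite -(pair_big xpredT xpredT
  (fun s b => if join s b \in [set w in Omega n | E w] then 1 else 0)).
rewrite [RHS]big_mkcond; apply: eq_bigr => s _.
case: (boolP (s \in OmegaP)) => sP.
  rewrite -sum1_card [RHS]big_mkcond; apply: eq_bigr => b _.
  by rewrite [join s b \in _]inE join_Omega sP [b \in [set _ in _ | _]]inE.
by rewrite big1 // => b _; rewrite [join s b \in _]inE join_Omega (negbTE sP).
Qed.

Lemma flip_OmegaB (i : 'I_n.+1) : 2 <= i -> flip_closed OmegaB i.
Proof.
move=> le_2i b; rewrite !inE; apply: eq_forallb => j; rewrite ffunE.
by case: (eqVneq j i) => [->|//]; rewrite ltnNge le_2i.
Qed.

End OutcomeSplit.

Local Open Scope ring_scope.

Definition Pr_bits (Phi : pred (seq bool)) m : rat := (count Phi (bool_seqs m))%:R / 2 ^+ m.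

Lemma Pr_bits_size (psi : nat -> bool) m : Pr_bits (fun s => psi (size s)) m = (psi m)%:R.
Proof. by rewrite /Pr_bits count_size_bool_seqs natrM natrX mulfK // expf_neq0. Qed.

Lemma Pr_bits_lead_trues_eq m k : Pr_bits (fun s => lead_trues s == k) m = PminG m k.
Proof.
rewrite /Pr_bits count_lead_trues_eq /PminG /tailG; case: ltnP => [lt_km|le_mk].
  have split_m : m = (m - k.+1 + k.+1)%N by rewrite subnK.
  rewrite [in X in _ / X]split_m exprD natrX exprS.
  by field; rewrite ?expf_neq0.
by case: (k == m); rewrite ?mul1r ?mul0r.
Qed.

Lemma Pr_bits_lead_trues_ge m k l :
  Pr_bits (fun s => (k <= lead_trues s)%N && (count negb s <= l)%N) m =
  tailG k * ((k <= m)%N%:R * binom_cdf (m - k) l).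
Proof.
rewrite /Pr_bits count_lead_trues_ge /tailG; case: leqP => [le_km|]; last by rewrite !mul0r mulr0.
rewrite mul1r /binom_cdf natr_sum mulr_suml mulr_sumr; apply: eq_bigr => j _.
have split_m : m = (m - k + k)%N by rewrite subnK.
rewrite [in X in _ / X]split_m exprD.
by field; rewrite ?expf_neq0.
Qed.

Lemma sum_by_value (R : pzSemiRingType) (T : finType) (A : {pred T})
    (f : T -> nat) (g : nat -> R) N : (forall x, f x < N)%N ->
  \sum_(j < N) (\sum_(x in A) (f x == j)%:R) * g j = \sum_(x in A) g (f x).
Proof.
move=> lt_fN; under eq_bigr do rewrite mulr_suml.
rewrite exchange_big /=; apply: eq_bigr => x _.
rewrite (bigD1 (Ordinal (lt_fN x))) //= eqxx mul1r big1 ?addr0 // => j neq_j.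
rewrite (_ : (f x == j) = false) ?mul0r //.
by apply: contraNF neq_j => /eqP eq_j; apply/eqP/val_inj.
Qed.

Section Distribution.
Variables (n : nat) (v : 'I_n).
Implicit Types (s : pairs_t n) (b : bits_t n).

Definition base s : outcome n := join s [ffun => false].

Definition sel_of s := sel_times v (base s) n.-1.

Definition mask s (t : 'I_n.+1) :=
  ~~ (froot (F (base s) t) v == tree_root (F (base s) t) (idx_a (base s t)) v).

Lemma same_pairs_base s b : same_pairs (join s b) (base s).
Proof. by move=> i; rewrite !ffunE. Qed.

Lemma root_record_join s b : s \in OmegaP n -> b \in OmegaB n ->
  root_record v (join s b) n.-1 = [seq b t (+) mask s t | t <- sel_of s].
Proof.
move=> sP bB; have wO : join s b \in Omega n by rewrite join_Omega sP.
have same_sel : sel_times v (join s b) n.-1 = sel_of s.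
  by rewrite /sel_of /sel_times (Sel_same_pairs v (same_pairs_base s b)).
rewrite /root_record same_sel; apply/eq_in_map => t.
rewrite -same_sel mem_sel_times => sel; rewrite keeps_root_Sel // /mask /F.
rewrite (froot_eq_tree_root_same _ _ _ (same_partition_after _ (same_pairs_base s b))).
by rewrite !ffunE.
Qed.

Lemma card_record_given_pairs s (Phi : pred (seq bool)) : s \in OmegaP n ->
  (#|[set b in OmegaB n | Phi (root_record v (join s b) n.-1)]| * 2 ^ size (sel_of s) =
   #|OmegaB n| * count Phi (bool_seqs (size (sel_of s))))%N.
Proof.
move=> sP; rewrite -(card_xor_view (mask s) Phi) ?uniq_sel_times //; last first.
  by move=> t; rewrite mem_sel_times => /Sel_ge2; apply: flip_OmegaB.
congr muln; apply: eq_card => b; rewrite ![b \in [set _ in _ | _]]inE.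
by case: (boolP (b \in OmegaB n)) => //= bB; rewrite root_record_join.
Qed.

Lemma Pr_record (E : pred (outcome n)) (Phi : pred (seq bool)) :
  {in Omega n, forall w, E w = Phi (root_record v w n.-1)} ->
  Pr E = #|OmegaB n|%:R / #|Omega n|%:R *
         \sum_(s in OmegaP n) Pr_bits Phi (size (sel_of s)).
Proof.
move=> EPhi; rewrite /Pr mulrAC mulr_sumr; congr (_ / _).
rewrite (eq_card (B := [set w in Omega n | Phi (root_record v w n.-1)])); last first.
  move=> w; rewrite ![w \in [set _ in _ | _]]inE.
  by case: (boolP (w \in Omega n)) => //= wO; rewrite EPhi.
rewrite card_Omega_join natr_sum; apply: eq_bigr => s sP.
apply: (@mulIf _ (2 ^+ size (sel_of s))); first by rewrite expf_neq0.
by rewrite /Pr_bits mulrA mulfVK ?expf_neq0 // -!natrX -!natrM card_record_given_pairs.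
Qed.

Lemma Pr_card_Sel (psi : nat -> bool) :
  Pr (fun w => psi #|Sel w v|) = #|OmegaB n|%:R / #|Omega n|%:R *
    \sum_(s in OmegaP n) (psi (size (sel_of s)))%:R.
Proof.
rewrite (@Pr_record _ (fun x => psi (size x))) => [|w _]; last first.
  by rewrite card_Sel size_map.
by congr (_ * _); apply: eq_bigr => s _; rewrite Pr_bits_size.
Qed.

Lemma size_sel_of s : (size (sel_of s) < n.+1)%N.
Proof. by rewrite size_filter ltnS (leq_trans (count_size _ _)) // size_map size_iota leq_pred. Qed.

Lemma Pr_record_by_Sel (E : pred (outcome n)) (Phi : pred (seq bool)) :
  {in Omega n, forall w, E w = Phi (root_record v w n.-1)} ->
  Pr E = \sum_(j < n.+1) Pr (fun w => #|Sel w v| == j) * Pr_bits Phi j.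
Proof.
move=> EPhi; rewrite (Pr_record EPhi) -(sum_by_value _ (Pr_bits Phi) size_sel_of).
rewrite mulr_sumr; apply: eq_bigr => j _.
by rewrite (Pr_card_Sel (fun m => m == j)) mulrA.
Qed.

Lemma Pr_card_Sel_and j (b : bool) :
  Pr (fun w => (#|Sel w v| == j) && b) = Pr (fun w => #|Sel w v| == j) * b%:R.
Proof.
rewrite (Pr_card_Sel (fun m => (m == j) && b)) (Pr_card_Sel (fun m => m == j)).
rewrite -[RHS]mulrA mulr_suml; congr (_ * _); apply: eq_bigr => s _.
by rewrite -natrM mulnb.
Qed.

End Distribution.

Unset Implicit Arguments.

Theorem lemma2p5 (n : nat) (v : 'I_n) :
  (forall k : nat,
     Pr (fun w => dn w v == k) =
     \sum_(s < n.+1) Pr (fun w => #|Sel w v| == s) * PminG s k)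
  /\
  (forall k l : nat,
     Pr (fun w => (k <= dn w v)%N && (hn w v <= l)%N) =
     tailG k * \sum_(s < n.+1)
        Pr (fun w => (#|Sel w v| == s) && (k <= s)%N) * binom_cdf (s - k) l).
Proof.
split=> [k | k l].
  rewrite (@Pr_record_by_Sel n v _ (fun x => lead_trues x == k)) => [|w wO].
    by under eq_bigr do rewrite Pr_bits_lead_trues_eq.
  by rewrite children_Tn.
rewrite (@Pr_record_by_Sel n v _ (fun x => (k <= lead_trues x)%N && (count negb x <= l)%N))
  => [|w wO]; last by rewrite children_Tn ?depth_Tn.
rewrite mulr_sumr; apply: eq_bigr => j _.
by rewrite Pr_bits_lead_trues_ge Pr_card_Sel_and; ring.
Qed.
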